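(* Under any CLC choice model, if a price vector $\mathbf p\in[0,\bar v]^N$ is a local Nash equilibrium, then there exists an ordering $\pi$ of the sellers such that $(\pi,\mathbf p)$ is a valid order-price pair.
   Context: CLC setup. There are $N$ sellers $\mathcal N=\{1,\dots,N\}$, each selling one item, and a unit mass of customers, each buying at most one item. Items have a price attribute (indexed $0$) and $K$ non-price attributes indexed by $\mathcal A=\{1,\dots,K\}$; $\bar{\mathcal A}=\{0\}\cup\mathcal A$. Non-price attribute $k$ takes values in an arbitrary set $\mathcal V^k$; prices lie in $\mathcal V=[0,\bar v]$ for a fixed $\bar v>0$. Seller $i$'s item has fixed non-price attribute values $v_i^k\in\mathcal V^k$ and price $p_i\in\mathcal V$ chosen by seller $i$; $\mathbf p=(p_1,\dots,p_N)$, and $v_i^0:=p_i$. Each customer $c$ has: a strict total order $\succ_c$ on $\bar{\mathcal A}$ (attribute importance); for each attribute $k$ a complete transitive weak preference $\succsim_c^k$ on its value set, with strict part $\succ_c^k$ and indifference $\sim_c^k$ (and $v\sim_c^k v$), where for price $p\succ_c^0p'$ iff $p<p'$ and $p\sim_c^0p'$ iff $p=p'$; a willingness-to-pay $w_c\in[0,\bar v]$; a set $\mathcal C_c\subseteq\mathcal V^1\times\cdots\times\mathcal V^K$ of admissible non-price attribute vectors; and a strict tie-breaking order over sellers. Customer $c$ lexicographically prefers item $i$ to item $j$ if there is an attribute $k$ with $v_i^{k'}\sim_c^{k'}v_j^{k'}$ for all $k'\succ_c k$ and $v_i^k\succ_c^k v_j^k$; if no such $k$ exists, the tie-breaking order decides.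 Under the Consider-then-Choose with Lexicographic Choice (CLC) model, customer $c$ forms the consideration set $\mathcal N_c=\{i\in\mathcal N: p_i\le w_c,\ (v_i^1,\dots,v_i^K)\in\mathcal C_c\}$, buys nothing if it is empty, and otherwise buys the top-ranked item of $\mathcal N_c$ under this lexicographic order (with tie-breaking). An instance of CLC choice is a joint distribution $\mathcal G$ of these customer primitives; the conditional distribution of $w_c$ given the other primitives is assumed to have a Lipschitz continuous density. $D_i(\mathbf p)$ is the probability a customer buys from seller $i$ and $R_i(\mathbf p)=p_iD_i(\mathbf p)$ is seller $i$'s revenue, also written $R_i(p_i,\mathbf p_{-i})$. Local Nash equilibrium (LNE): $\mathbf p$ with $p_i\in\mathcal V$ for all $i$ such that there exist open neighborhoods $\mathcal U_i\subseteq\mathbb R$ with $p_i\in\mathcal U_i$ and $p_i\in\arg\max_{p\in\overline{\mathcal U_i}}R_i(p,\mathbf p_{-i})$ for all $i$ ($\overline{\mathcal U}$ is the closure). Notation: for $\mathcal S\subseteq\mathcal N$, $\mathbf p^{\mathcal S}$ is the price vector keeping the prices of sellers in $\mathcal S$ and setting the prices of all sellers outside $\mathcal S$ to $0$; $p^{\min}(\mathcal S)=\min_{j\in\mathcal S}p_j$, with $p^{\min}(\emptyset)=\bar v$. Valid order-price pair (VOP): a pair $(\pi,\mathbf p)$ where $\pi:[N]\to\mathcal N$ is a bijection ($\pi(l)$ is the seller of rank $l$) and $\mathbf p\in\mathcal V^N$ satisfies (1) $0\le p_{\pi(N)}\le\cdots\le p_{\pi(1)}\le\bar v$, and (2) letting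 $\mathcal S_1=\emptyset$ and $\mathcal S_l=\{\pi(j):j<l\}$, for every $l$ the price $p_{\pi(l)}$ is a local maximum of $p\mapsto R_{\pi(l)}(p,\mathbf p^{\mathcal S_l}_{-\pi(l)})$ on the interval $[0,p^{\min}(\mathcal S_l)]$. *)

From HB Require Import structures.
From mathcomp Require Import all_boot all_order all_algebra all_fingroup.
From mathcomp Require Import all_classical all_reals all_analysis.
Set Implicit Arguments. Unset Strict Implicit. Unset Printing Implicit Defensive.
Import Order.TTheory GRing.Theory Num.Theory.
Import numFieldNormedType.Exports.
Local Open Scope classical_set_scope.
Local Open Scope ring_scope.

(* Attributes: [None] is the price attribute (index 0),
   [Some k] (k : 'I_K) is non-price attribute k+1. *)
Notation attr K := (option 'I_K).

(* Customer primitives other than the willingness-to-pay w_c. *)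
Record CLCprims (N K : nat) (V : 'I_K -> Type) := CLCPrims {
  imp : attr K -> attr K -> Prop;          (* a >_c b : a more important than b *)
  pref : forall k : 'I_K, V k -> V k -> Prop;
  adm : set (forall k : 'I_K, V k);
  tb : 'I_N -> 'I_N -> Prop                 (* i ranked before j by tie-breaking *)
}.
Arguments imp {N K V} c.
Arguments pref {N K V} c k.
Arguments adm {N K V} c.
Arguments tb {N K V} c.

Definition strict_total_order (T : Type) (r : T -> T -> Prop) :=
  [/\ forall x, ~ r x x,
      forall x y z, r x y -> r y z -> r x z
    & forall x y, x <> y -> r x y \/ r y x].

Definition weak_order (T : Type) (r : T -> T -> Prop) :=
  (forall x y, r x y \/ r y x) /\ (forall x y z, r x y -> r y z -> r x z).

Definition valid_prims N K (V : 'I_K -> Type) (c : CLCprims N V) :=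
  [/\ strict_total_order (imp c),
      forall k, weak_order (pref c k)
    & strict_total_order (tb c)].

Section Choice.
Context (R : realType) (N K : nat) (V : 'I_K -> Type)
        (vals : 'I_N -> forall k : 'I_K, V k).

Definition indiff (c : CLCprims N V) (p : 'I_N -> R) (a : attr K) (i j : 'I_N) : Prop :=
  match a with
  | None => p i = p j
  | Some k => pref c k (vals i k) (vals j k) /\ pref c k (vals j k) (vals i k)
  end.

Definition sbetter (c : CLCprims N V) (p : 'I_N -> R) (a : attr K) (i j : 'I_N) : Prop :=
  match a with
  | None => p i < p j
  | Some k => pref c k (vals i k) (vals j k) /\ ~ pref c k (vals j k) (vals i k)
  end.

Definition lexpref (c : CLCprims N V) (p : 'I_N -> R) (i j : 'I_N) : Prop :=
  exists a : attr K, (forall a', imp c a' a -> indiff c p a' i j) /\ sbetter c p a i j.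

Definition ranks_above (c : CLCprims N V) (p : 'I_N -> R) (i j : 'I_N) : Prop :=
  lexpref c p i j \/ (~ lexpref c p i j /\ ~ lexpref c p j i /\ tb c i j).

Definition considers (c : CLCprims N V) (w : R) (p : 'I_N -> R) (i : 'I_N) : Prop := p i <= w /\ adm c (vals i).

Definition buys (c : CLCprims N V) (w : R) (p : 'I_N -> R) (i : 'I_N) : Prop :=
  considers c w p i /\ forall j, considers c w p j -> j <> i -> ranks_above c p i j.

End Choice.

Section Instance.
Context (R : realType) (N K : nat) (V : 'I_K -> Type)
        (vals : 'I_N -> forall k : 'I_K, V k) (vbar : R)
        (d : measure_display) (Theta : measurableType d)
        (mu : probability Theta R) (other : Theta -> CLCprims N V)
        (f : Theta -> R -> R).

Definition prims_measurable : Prop :=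
  [/\ forall a b, measurable [set t : Theta | imp (other t) a b],
      forall (k : 'I_K) (i j : 'I_N),
        measurable [set t : Theta | pref (other t) k (vals i k) (vals j k)],
      forall i, measurable [set t : Theta | adm (other t) (vals i)]
    & forall i j, measurable [set t : Theta | tb (other t) i j]].

(* f t is the conditional density of w_c on [0, vbar] given the other
   primitives t; it is Lipschitz continuous. *)
Definition lipschitz_cond_density : Prop :=
  [/\ forall t w, 0 <= f t w,
      measurable_fun [set: Theta * R] (fun x : Theta * R => f x.1 x.2),
      forall t, (\int[lebesgue_measure]_(w in `[0%R, vbar]) (f t w)%:E = 1)%E
    & forall t, exists L : R, forall w w', w \in `[0, vbar] -> w' \in `[0, vbar] ->
        `|f t w - f t w'| <= L * `|w - w'|].

(* D_i(p): probability that a customer buys from seller i. The joint law of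
   the primitives is  mu(dt) f(t,w) dw. *)
Definition demand (i : 'I_N) (p : 'I_N -> R) : R :=
  fine (\int[mu]_t
          \int[lebesgue_measure]_(w in `[0%R, vbar])
             (\1_[set w' | buys vals (other t) w' p i] w * f t w)%:E).

Definition revenue (i : 'I_N) (p : 'I_N -> R) : R := p i * demand i p.

End Instance.

Definition upd (R : Type) N (p : 'I_N -> R) (i : 'I_N) (q : R) : 'I_N -> R :=
  fun j => if j == i then q else p j.

Definition restrict (R : realType) N (p : 'I_N -> R) (S : {set 'I_N}) : 'I_N -> R :=
  fun j => if j \in S then p j else 0.

Definition pmin (R : realType) N (vbar : R) (p : 'I_N -> R) (S : {set 'I_N}) : R :=
  if [pick j in S] is Some j0 then \big[Num.min/p j0]_(j in S) p j else vbar.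

Definition local_nash (R : realType) N (vbar : R)
    (Rev : 'I_N -> ('I_N -> R) -> R) (p : 'I_N -> R) : Prop :=
  (forall i, 0 <= p i <= vbar) /\
  forall i, exists U : set R, [/\ open U, U (p i) &
    forall q, closure U q -> Rev i (upd p i q) <= Rev i p].

Definition local_max_on (R : realType) (g : R -> R) (lo hi x : R) : Prop :=
  lo <= x <= hi /\
  exists e : R, 0 < e /\ forall q, lo <= q <= hi -> `|q - x| < e -> g q <= g x.

Definition valid_order_price (R : realType) N (vbar : R)
    (Rev : 'I_N -> ('I_N -> R) -> R) (pi : {perm 'I_N}) (p : 'I_N -> R) : Prop :=
  [/\ forall i, 0 <= p i <= vbar,
      (forall l l' : 'I_N, (l <= l')%N -> p (pi l') <= p (pi l))
    & forall l : 'I_N,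
        let S := [set pi j | j : 'I_N & (j < l)%N] in
        local_max_on (fun q => Rev (pi l) (upd (restrict p S) (pi l) q))
                     0 (pmin vbar p S) (p (pi l))].

(* Order the sellers by decreasing equilibrium price and let S be the sellers
   ranked before seller i, all at least as expensive as i. For own prices q
   near p_i,
     R_i(q, p^S_-i) <= R_i(q, p_-i) <= R_i(p) <= R_i(p_i, p^S_-i):
   lowering rivals' prices to 0 only loses i customers, p_i is locally optimal,
   and zeroing the prices of the rivals no more expensive than i costs i no
   demand. For the last step, a lost customer must be one whom an equally
   priced rival k would win by any undercut; if such customers had positive
   mass, k could profitably undercut p_i slightly, contradicting the local
   optimality of p_k. *)

From Pilot Require Import Defs.
From HB Require Import structures.
From mathcomp Require Import all_boot all_order all_algebra all_fingroup.
From mathcomp Require Import all_classical all_reals all_analysis.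
From mathcomp Require Import measurable_realfun lebesgue_integral ring lra.
Import Order.TTheory GRing.Theory Num.Theory.
Import numFieldNormedType.Exports.
Local Open Scope classical_set_scope.
Local Open Scope ring_scope.
Set Implicit Arguments. Unset Strict Implicit. Unset Printing Implicit Defensive.

Lemma strict_order_minimal (T : finType) (r : T -> T -> Prop) (P : T -> Prop) x :
  (forall y, ~ r y y) -> (forall y z u, r y z -> r z u -> r y u) -> P x ->
  exists2 y, P y & forall z, r z y -> ~ P z.
Proof.
move=> irr tr; pose below y := [set z | `[< r z y >]]%SET.
have : (#|below x| <= #|below x|)%N by [].
move: {2}#|below x| => n; elim: n x => [|n IH] x hx Px;
  (have [|/existsNP[z /not_implyP[rzx /contrapT Pz]]] :=
    pselect (forall z, r z x -> ~ P z); first by exists x).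
  by move: hx; rewrite leqn0 => /eqP/card0_eq/(_ z); rewrite !inE asboolT.
apply: (IH z _ Pz); rewrite -ltnS; apply: leq_trans hx; apply: proper_card.
apply/properP; split; last by exists z; rewrite !inE ?(asboolT rzx) ?(asboolF (irr z)).
by apply/fintype.subsetP => y; rewrite !inE => /asboolP ryz; apply: tr rzx; exact/asboolP.
Qed.

Lemma upd_same (T : Type) N (p : 'I_N -> T) k q : upd p k q k = q.
Proof. by rewrite /upd eqxx. Qed.

Lemma upd_other (T : Type) N (p : 'I_N -> T) k q j : j <> k -> upd p k q j = p j.
Proof. by move=> /eqP/negbTE jk; rewrite /upd jk. Qed.

Section CustomerChoice.
Context (R : realType) (N K : nat) (V : 'I_K -> Type)
        (vals : 'I_N -> forall k : 'I_K, V k) (c : CLCprims N V).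
Hypothesis hc : valid_prims c.
Implicit Types (p : 'I_N -> R) (a : attr K) (i j k : 'I_N).

Let imp_irr : forall a, ~ imp c a a.
Proof. by case: hc => -[]. Qed.
Let imp_trans : forall a b a', imp c a b -> imp c b a' -> imp c a a'.
Proof. by case: hc => -[]. Qed.
Let imp_total : forall a b, a <> b -> imp c a b \/ imp c b a.
Proof. by case: hc => -[]. Qed.
Let pref_total (q : 'I_K) : forall x y, pref c q x y \/ pref c q y x.
Proof. by case: hc => _ /(_ q) []. Qed.
Let pref_trans (q : 'I_K) : forall x y z, pref c q x y -> pref c q y z -> pref c q x z.
Proof. by case: hc => _ /(_ q) []. Qed.
Let tb_irr : forall i, ~ tb c i i.
Proof. by case: hc => _ _ []. Qed.
Let tb_trans : forall i j k, tb c i j -> tb c j k -> tb c i k.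
Proof. by case: hc => _ _ []. Qed.
Let tb_total : forall i j, i <> j -> tb c i j \/ tb c j i.
Proof. by case: hc => _ _ []. Qed.

Lemma indiff_sym p a i j : indiff vals c p a i j -> indiff vals c p a j i.
Proof. by case: a => [k'|] /= => [[]|->]. Qed.

Lemma indiff_trans p a i j k :
  indiff vals c p a i j -> indiff vals c p a j k -> indiff vals c p a i k.
Proof.
case: a => [k'|] /=; last by move=> -> ->.
by move=> [h1 h2] [h3 h4]; split; apply: pref_trans; eauto.
Qed.

Lemma sbetter_indiff_trans p a i j k :
  sbetter vals c p a i j -> indiff vals c p a j k -> sbetter vals c p a i k.
Proof.
case: a => [k'|] /=; last by move=> ? <-.
move=> [h1 h2] [h3 h4]; split; first by apply: pref_trans; eauto.
by move=> h; apply: h2; apply: pref_trans; eauto.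
Qed.

Lemma indiff_sbetter_trans p a i j k :
  indiff vals c p a i j -> sbetter vals c p a j k -> sbetter vals c p a i k.
Proof.
case: a => [k'|] /=; last by move=> ->.
move=> [h1 h2] [h3 h4]; split; first by apply: pref_trans; eauto.
by move=> h; apply: h4; apply: pref_trans; eauto.
Qed.

Lemma sbetter_trans p a i j k :
  sbetter vals c p a i j -> sbetter vals c p a j k -> sbetter vals c p a i k.
Proof.
case: a => [k'|] /=; last exact: lt_trans.
move=> [h1 h2] [h3 h4]; split; first by apply: pref_trans; eauto.
by move=> h; apply: h4; apply: pref_trans; eauto.
Qed.

Lemma sbetter_asym p a i j : sbetter vals c p a i j -> ~ sbetter vals c p a j i.
Proof. by case: a => [k'|] /= => [[_ ?] []|/lt_gtF->]. Qed.

Lemma sbetter_nindiff p a i j : sbetter vals c p a i j -> ~ indiff vals c p a i j.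
Proof. by case: a => [k'|] /= => [[_ ?] []|/lt_eqF/eqP]. Qed.

Lemma nindiff_sbetter p a i j : ~ indiff vals c p a i j ->
  sbetter vals c p a i j \/ sbetter vals c p a j i.
Proof.
case: a => [k'|] /=; last by move=> /eqP; rewrite neq_lt => /orP[]; [left|right].
by move=> h; case: (pref_total (vals i k') (vals j k')) => h1; [left|right];
  split => // h2; apply: h.
Qed.

Lemma lexpref_trans p i j k :
  lexpref vals c p i j -> lexpref vals c p j k -> lexpref vals c p i k.
Proof.
move=> [a [Ha Sa]] [b [Hb Sb]].
have [eab|nab] := pselect (a = b).
  subst b; exists a; split; last exact: sbetter_trans Sa Sb.
  by move=> a' ha; exact: indiff_trans (Ha _ ha) (Hb _ ha).
case: (imp_total nab) => hab.
  exists a; split; last exact: sbetter_indiff_trans Sa (Hb _ hab).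
  by move=> a' ha; apply: indiff_trans (Ha _ ha) (Hb _ (imp_trans ha hab)).
exists b; split; last exact: indiff_sbetter_trans (Ha _ hab) Sb.
by move=> a' hb; apply: indiff_trans (Ha _ (imp_trans hb hab)) (Hb _ hb).
Qed.

Lemma lexpref_asym p i j : lexpref vals c p i j -> ~ lexpref vals c p j i.
Proof.
move=> [a [Ha Sa]] [b [Hb Sb]].
have [eab|nab] := pselect (a = b); first by subst b; exact: sbetter_asym Sa Sb.
case: (imp_total nab) => hab.
  by apply: (sbetter_nindiff Sa); apply: indiff_sym; apply: Hb.
by apply: (sbetter_nindiff Sb); apply: indiff_sym; apply: Ha.
Qed.

Definition tied p i j := forall a, indiff vals c p a i j.

Lemma tied_sym p i j : tied p i j -> tied p j i.
Proof. by move=> h a; apply: indiff_sym. Qed.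

Lemma tied_nlexpref p i j : tied p i j -> ~ lexpref vals c p i j.
Proof. by move=> h [a [_ /sbetter_nindiff]]; apply. Qed.

(* The most important attribute on which i and j differ decides between them. *)
Lemma nlexpref_tied p i j :
  ~ lexpref vals c p i j -> ~ lexpref vals c p j i -> tied p i j.
Proof.
move=> nij nji a0; apply: contrapT => /(strict_order_minimal
  (P := fun a => ~ indiff vals c p a i j) imp_irr imp_trans) [a /nindiff_sbetter hs hmin].
have above : forall a', imp c a' a -> indiff vals c p a' i j.
  by move=> a' /hmin /contrapT.
case: hs => hs; [apply: nij|apply: nji]; exists a; split => // a' /above.
exact: indiff_sym.
Qed.

Lemma lexpref_tiedr p i j k :
  lexpref vals c p i j -> tied p j k -> lexpref vals c p i k.
Proof.
move=> [a [Ha Sa]] H; exists a; split; last exact: sbetter_indiff_trans Sa (H a).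
by move=> a' /Ha h; exact: indiff_trans h (H a').
Qed.

Lemma lexpref_tiedl p i j k :
  tied p i j -> lexpref vals c p j k -> lexpref vals c p i k.
Proof.
move=> H [a [Ha Sa]]; exists a; split; last exact: indiff_sbetter_trans (H a) Sa.
by move=> a' /Ha h; exact: indiff_trans (H a') h.
Qed.

Lemma ranks_above_asym p i j :
  ranks_above vals c p i j -> ~ ranks_above vals c p j i.
Proof.
case=> [l|[n1 [n2 t1]]] [l'|[n1' [n2' t2]]].
- exact: lexpref_asym l l'.
- exact: n2' l.
- exact: n2 l'.
- exact: tb_irr (tb_trans t1 t2).
Qed.

Lemma ranks_above_total p i j :
  i <> j -> ranks_above vals c p i j \/ ranks_above vals c p j i.
Proof.
move=> nij.
have [l|nl] := pselect (lexpref vals c p i j); first by left; left.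
have [l'|nl'] := pselect (lexpref vals c p j i); first by right; left.
by case: (tb_total nij) => t; [left|right]; right.
Qed.

Lemma ranks_above_trans p i j k :
  ranks_above vals c p i j -> ranks_above vals c p j k -> ranks_above vals c p i k.
Proof.
case=> [l|[n1 [n2 t1]]] [l'|[n1' [n2' t2]]].
- by left; exact: lexpref_trans l l'.
- by left; apply: lexpref_tiedr l (nlexpref_tied n1' n2').
- by left; apply: lexpref_tiedl (nlexpref_tied n1 n2) l'.
- have tik : tied p i k.
    by move=> a; exact: indiff_trans (nlexpref_tied n1 n2 a) (nlexpref_tied n1' n2' a).
  right; split; first exact: tied_nlexpref.
  by split; [apply/tied_nlexpref/tied_sym|exact: tb_trans t1 t2].
Qed.

Lemma lexpref_price_mono p p' i j : p' i - p' j <= p i - p j ->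
  lexpref vals c p i j -> lexpref vals c p' i j.
Proof.
move=> hp [[k'|] [Ha Sa]]; last first.
  exists None; split; first by move=> [k''|] h; [exact: (Ha _ h)|case: (imp_irr h)].
  by rewrite /= -subr_lt0 (le_lt_trans hp) // subr_lt0.
have [hN|nhN] := pselect (imp c None (Some k')); last first.
  by exists (Some k'); split => // -[k''|] h; [exact: (Ha _ h)|case: nhN].
have /= eqp := Ha _ hN.
have : p' i <= p' j by rewrite -subr_le0 (le_trans hp) // eqp subrr.
rewrite le_eqVlt => /orP[/eqP e|lt].
  by exists (Some k'); split => // -[k''|] /Ha.
exists None; split => // -[k''|] h; last by case: (imp_irr h).
exact: Ha _ (imp_trans h hN).
Qed.

Lemma ranks_above_price_mono p p' i j : p' i - p' j <= p i - p j ->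
  ranks_above vals c p i j -> ranks_above vals c p' i j.
Proof.
move=> hp [l|[n1 [n2 t]]]; first by left; exact: lexpref_price_mono hp l.
have [l|nl] := pselect (lexpref vals c p' i j); first by left.
right; split => //; split => // -[[k'|] [_ Sb]].
  by apply: (sbetter_nindiff Sb); apply: indiff_sym; exact: (nlexpref_tied n1 n2 (Some k')).
move: hp Sb; rewrite /= (nlexpref_tied n1 n2 None) subrr subr_le0 => h.
by move/(le_lt_trans h); rewrite ltxx.
Qed.

Section PriceOrder.
Variables (p p' : 'I_N -> R) (i j : 'I_N).
Hypotheses (hlt : (p i < p j) = (p' i < p' j)) (hgt : (p j < p i) = (p' j < p' i)).

Let indiff_price_order a : indiff vals c p a i j <-> indiff vals c p' a i j.
Proof.
case: a => [k'|] //=.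
have E (x y : R) : (x == y) = ~~ (y < x) && ~~ (x < y) by rewrite eq_le !leNgt.
have e : (p i == p j) = (p' i == p' j) by rewrite !E hlt hgt.
by split => /eqP; [rewrite e|rewrite -e] => /eqP.
Qed.

Lemma lexpref_price_order : lexpref vals c p i j -> lexpref vals c p' i j.
Proof.
move=> [a [Ha Sa]]; exists a; split; first by move=> a' /Ha /indiff_price_order.
by move: Sa; case: a {Ha} => [k'|] //=; rewrite hlt.
Qed.
End PriceOrder.

Lemma ranks_above_price_order p p' i j :
  (p i < p j) = (p' i < p' j) -> (p j < p i) = (p' j < p' i) ->
  ranks_above vals c p i j -> ranks_above vals c p' i j.
Proof.
move=> hlt hgt [l|[n1 [n2 t]]]; first by left; exact: lexpref_price_order l.
right; split; first by move/(lexpref_price_order (esym hlt) (esym hgt)).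
by split => // /(lexpref_price_order (esym hgt) (esym hlt)).
Qed.

Lemma buys_raise_rivals w p p' i : (forall j, j <> i -> p' j <= p j) -> p' i = p i ->
  buys vals c w p' i -> buys vals c w p i.
Proof.
move=> hle hi [[ci ai] H]; split; first by split => //; rewrite -hi.
move=> j [cj aj] nji.
have : ranks_above vals c p' i j.
  by apply: H => //; split => //; apply: le_trans cj; exact: hle.
by apply: ranks_above_price_mono; rewrite hi lerD2l lerN2; exact: hle.
Qed.

Lemma buys_lower_own w p k q : q <= p k -> buys vals c w p k ->
  buys vals c w (upd p k q) k.
Proof.
move=> hq [[ck ak] H]; split.
  by split => //; rewrite upd_same; exact: le_trans ck.
move=> j [cj aj] njk.
have : ranks_above vals c p k j.
  by apply: H => //; split => //; rewrite -(upd_other p q njk).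
by apply: ranks_above_price_mono; rewrite upd_same upd_other // lerD2r.
Qed.

Lemma buys_unique w p i k : buys vals c w p i -> buys vals c w p k -> i = k.
Proof.
move=> [ci Hi] [ck Hk]; apply: contrapT => nik.
exact: ranks_above_asym (Hi _ ck (nesym nik)) (Hk _ ci nik).
Qed.

(* By [ranks_above_price_order], switching at price 0 means switching at any
   price below p i. *)
Definition switches_on_undercut w p i k :=
  buys vals c w p i /\ considers vals c w (upd p k 0) k /\
  ranks_above vals c (upd p k 0) k i /\ k <> i /\ p k = p i.

Lemma switches_on_undercut_buys w p i k q : 0 <= q < p i ->
  switches_on_undercut w p i k -> buys vals c w (upd p k q) k.
Proof.
move=> /andP[q0 qi] [[[ci ai] H] [[ck ak] [rki [nki eki]]]].
have pi0 : 0 < p i by exact: le_lt_trans qi.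
split; first by split => //; rewrite upd_same (le_trans _ ci) // ltW.
move=> m [cm am] nmk.
have nik : i <> k by exact: nesym.
have rki' : ranks_above vals c (upd p k q) k i.
  by apply: ranks_above_price_order rki; rewrite !upd_same !(upd_other _ _ nik)
    ?pi0 ?qi // (lt_gtF pi0) (lt_gtF qi).
have [->//|nmi] := pselect (m = i).
apply: ranks_above_trans rki' _; apply: ranks_above_price_order (H m _ nmi).
- by rewrite !(upd_other _ _ nik) !(upd_other _ _ nmk).
- by rewrite !(upd_other _ _ nik) !(upd_other _ _ nmk).
- by split => //; rewrite -(upd_other p q nmk).
Qed.

Lemma buys_after_zeroing w p p'' i : 0 < p i -> p'' i = p i ->
  (forall j, j <> i -> p'' j = p j \/ (p'' j = 0 /\ p j <= p i)) ->
  buys vals c w p i -> buys vals c w p'' i \/ exists k, switches_on_undercut w p i k.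
Proof.
move=> pi0 hi hj hb; have [//|nb] := pselect (buys vals c w p'' i); first by left.
right; move: (hb) => [[ci ai] H].
have : ~ (forall j, considers vals c w p'' j -> j <> i -> ranks_above vals c p'' i j).
  by move=> h; apply: nb; split => //; split => //; rewrite hi.
move=> /existsNP [j /not_implyP [[cj aj] /not_implyP [nji nr]]].
have r : ranks_above vals c p'' j i.
  by case: (ranks_above_total p'' nji) => // h; case: nr.
case: (hj j nji) => [e|[e hji]].
  case: nr; apply: (ranks_above_price_order (p := p)); rewrite ?hi ?e //.
  by apply: H => //; split => //; rewrite -e.
move: hji; rewrite le_eqVlt => /orP[/eqP eji|lji].
  exists j; split => //; split; first by split => //; rewrite upd_same -e.
  split; last by [].
  by apply: ranks_above_price_order r; rewrite upd_same (upd_other _ _ (nesym nji)) e hi.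
case: nr; apply: (ranks_above_price_order (p := p)); rewrite ?hi ?e.
- by rewrite (lt_gtF lji) (lt_gtF pi0).
- by rewrite lji pi0.
by apply: H => //; split => //; apply: le_trans ci; exact: ltW.
Qed.

End CustomerChoice.

Section MeasurableProp.
Context d (T : measurableType d).
Implicit Types (A B : T -> Prop).

Lemma measurable_conj A B : measurable [set x | A x] -> measurable [set x | B x] ->
  measurable [set x | A x /\ B x].
Proof. exact: measurableI. Qed.

Lemma measurable_disj A B : measurable [set x | A x] -> measurable [set x | B x] ->
  measurable [set x | A x \/ B x].
Proof. exact: measurableU. Qed.

Lemma measurable_not A : measurable [set x | A x] -> measurable [set x | ~ A x].
Proof. exact: measurableC. Qed.

Lemma measurable_impl A B : measurable [set x | A x] -> measurable [set x | B x] ->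
  measurable [set x | A x -> B x].
Proof.
move=> mA mB; rewrite (_ : [set x | A x -> B x] = [set x | ~ A x \/ B x]).
  by apply: measurable_disj => //; apply: measurable_not.
apply/seteqP; split => x /=; last by case=> // nA /nA.
by have [/[swap]/[apply]|] := pselect (A x); [right|left].
Qed.

Lemma measurable_cst_prop (P : Prop) : measurable [set _ : T | P].
Proof.
have [h|h] := pselect P; first by rewrite (propT h); exact: measurableT.
by rewrite (propF h); exact: measurable0.
Qed.

Lemma measurable_finforall (I : finType) (P : I -> T -> Prop) :
  (forall i, measurable [set x | P i x]) -> measurable [set x | forall i, P i x].
Proof.
move=> mP; rewrite (_ : [set x | _] = \bigcap_(i in [set: I]) [set x | P i x]).
  by apply: fin_bigcap_measurable => //; exact: finite_finset.
by apply/seteqP; split => x /= h i; [move=> _|]; apply: h.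
Qed.

Lemma measurable_finexists (I : finType) (P : I -> T -> Prop) :
  (forall i, measurable [set x | P i x]) -> measurable [set x | exists i, P i x].
Proof.
move=> mP; rewrite (_ : [set x | _] = \bigcup_(i in [set: I]) [set x | P i x]).
  by apply: fin_bigcup_measurable => //; exact: finite_finset.
by apply/seteqP; split => x /= [i h]; exists i.
Qed.
End MeasurableProp.

Lemma measurable_fst_pred d1 d2 (T1 : measurableType d1) (T2 : measurableType d2)
    (E : T1 -> Prop) :
  measurable [set x | E x] -> measurable [set z : T1 * T2 | E z.1].
Proof.
move=> mE; rewrite (_ : [set z | _] = [set x | E x] `*` setT); first exact: measurableX.
by apply/seteqP; split => z /=; [move=> h; split|case].
Qed.

Lemma measurable_snd_ge d (T : measurableType d) (R : realType) (a : R) :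
  measurable [set z : T * R | a <= z.2].
Proof.
rewrite (_ : [set z | _] = setT `*` `[a, +oo[%classic).
  by apply: measurableX => //; exact: measurable_itv.
by apply/seteqP; split => z /=; rewrite in_itv /= andbT; [move=> h; split|case].
Qed.

Section ConditionalMass.
Context (R : realType) (vbar : R) (d : measure_display) (Theta : measurableType d)
        (mu : probability Theta R) (f : Theta -> R -> R).
Hypothesis hdens : lipschitz_cond_density vbar f.

Local Notation event X := (measurable [set z : Theta * R | X z.1 z.2]).

Definition emass (X : Theta -> R -> Prop) : \bar R :=
  \int[mu]_t \int[lebesgue_measure]_(w in `[0%R, vbar]) (\1_[set w' | X t w'] w * f t w)%:E.

Definition mass (X : Theta -> R -> Prop) : R := fine (emass X).

Let f_ge0 t w : 0 <= f t w. Proof. by case: hdens. Qed.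

Let dens (z : Theta * R) := f z.1 z.2 * \1_`[0%R, vbar] z.2.

Let weight X (z : Theta * R) := if `[< X z.1 z.2 >] then dens z else 0.

Let dens_ge0 z : 0 <= dens z. Proof. by rewrite mulr_ge0 ?f_ge0. Qed.

Let weight_ge0 X z : 0 <= weight X z.
Proof. by rewrite /weight; case: ifP. Qed.

Let measurable_weight X : event X ->
  measurable_fun [set: Theta * R] (fun z => (weight X z)%:E).
Proof.
move=> mX; case: hdens => _ mf _ _; apply/measurable_EFinP.
rewrite (_ : weight X = \1_[set z | X z.1 z.2] \* dens); last first.
  apply/funext => z /=; rewrite /weight indicE.
  by case: asboolP => h; [rewrite mem_set ?mul1r|rewrite memNset ?mul0r].
apply: measurable_funM; first exact: measurable_indic.
apply: measurable_funM; first exact: mf.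
apply: measurableT_comp; last exact: measurable_snd.
by apply: measurable_indic; exact: measurable_itv.
Qed.

(* Tonelli turns the iterated integral into one over Theta * R, where
   pointwise comparisons of the integrands suffice. *)
Let emass_prodE X : event X ->
  emass X = (\int[mu \x lebesgue_measure]_z (weight X z)%:E)%E.
Proof.
move=> mX; rewrite fubini_tonelli1 //;
  [|exact: measurable_weight|by move=> z; rewrite lee_fin weight_ge0].
apply: eq_integral => t _; rewrite integral_mkcond /fubini_F.
apply: eq_integral => w _; rewrite patchE /weight /dens indicE /=.
rewrite indicE; case: ifP => hw; case: asboolP => h;
  by rewrite ?(mem_set h) ?(memNset h) ?mul1r ?mul0r ?mulr1 ?mulr0.
Qed.

Let emass_ge0 X : (0 <= emass X)%E.
Proof.
by apply: integral_ge0 => t _; apply: integral_ge0 => w _; rewrite lee_fin mulr_ge0.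
Qed.

Let emass_le X Y : event X -> event Y -> (forall t w, X t w -> Y t w) ->
  (emass X <= emass Y)%E.
Proof.
move=> mX mY XY; rewrite !emass_prodE //.
apply: ge0_le_integral => //; [|exact: measurable_weight|exact: measurable_weight|].
  by move=> z _; rewrite lee_fin.
move=> z _; rewrite lee_fin /weight.
by case: asboolP => hx; case: asboolP => hy //; case: hy; apply: XY.
Qed.

Let emass_cst_True : emass (fun _ _ => True) = 1%E.
Proof.
case: hdens => _ _ f1 _; rewrite /emass.
transitivity (\int[mu]_t (cst 1%E) t)%E; last first.
  by rewrite integral_cst // mul1e; exact: probability_setT.
apply: eq_integral => t _; rewrite -[RHS](f1 t); apply: eq_integral => w _.
by rewrite indicE mem_set // mul1r.
Qed.

Let emass_fin X : event X -> emass X \is a fin_num.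
Proof.
move=> mX; rewrite ge0_fin_numE //; apply: (@le_lt_trans _ _ 1%E); last exact: ltey.
by rewrite -emass_cst_True; apply: emass_le => //; exact: measurable_cst_prop.
Qed.

Let emass_orE X Y : event X -> event Y ->
  (emass X + emass Y)%E =
  (\int[mu \x lebesgue_measure]_z ((weight X z)%:E + (weight Y z)%:E))%E.
Proof.
move=> mX mY; rewrite !emass_prodE //; apply/esym.
by apply: ge0_integralD => //; [|exact: measurable_weight| |exact: measurable_weight];
  move=> z _; rewrite lee_fin.
Qed.

Let emass_or_le X Y : event X -> event Y ->
  (emass (fun t w => X t w \/ Y t w) <= emass X + emass Y)%E.
Proof.
move=> mX mY; rewrite emass_orE // emass_prodE; last exact: measurable_disj.
apply: ge0_le_integral => //; [|apply: measurable_weight; exact: measurable_disj| |].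
- by move=> z _; rewrite lee_fin.
- by apply: emeasurable_funD; exact: measurable_weight.
move=> z _; rewrite -EFinD lee_fin /weight.
case: asboolP => hxy; case: asboolP => hx; case: asboolP => hy;
  rewrite ?addr0 ?add0r ?lerDl ?lerDr ?addr_ge0 ?dens_ge0 //.
by case: hxy => [/hx|/hy].
Qed.

Let emass_or X Y : event X -> event Y -> (forall t w, X t w -> ~ Y t w) ->
  emass (fun t w => X t w \/ Y t w) = (emass X + emass Y)%E.
Proof.
move=> mX mY XY; rewrite emass_orE // emass_prodE; last exact: measurable_disj.
apply: eq_integral => z _; rewrite -EFinD /weight.
case: asboolP => hxy; case: asboolP => hx; case: asboolP => hy;
  rewrite ?addr0 ?add0r //; first [by case: (XY _ _ hx hy)|by case: hxy; tauto].
Qed.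

Lemma mass_ge0 X : 0 <= mass X.
Proof. exact: fine_ge0 (emass_ge0 X). Qed.

Lemma mass_le X Y : event X -> event Y -> (forall t w, X t w -> Y t w) ->
  mass X <= mass Y.
Proof.
by move=> mX mY XY; apply: fine_le; [exact: emass_fin|exact: emass_fin|exact: emass_le].
Qed.

Lemma mass_le1 X : event X -> mass X <= 1.
Proof.
move=> mX; have -> : 1 = mass (fun _ _ => True) by rewrite /mass emass_cst_True.
by apply: mass_le => //; exact: measurable_cst_prop.
Qed.

Lemma mass_or_le X Y : event X -> event Y ->
  mass (fun t w => X t w \/ Y t w) <= mass X + mass Y.
Proof.
move=> mX mY; have fX := emass_fin mX; have fY := emass_fin mY.
have fXY := emass_fin (X := fun t w => X t w \/ Y t w) (measurable_disj mX mY).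
rewrite /mass -(fineD fX fY); apply: fine_le fXY _ (emass_or_le mX mY).
by rewrite fin_numD fX fY.
Qed.

Lemma mass_or X Y : event X -> event Y -> (forall t w, X t w -> ~ Y t w) ->
  mass (fun t w => X t w \/ Y t w) = mass X + mass Y.
Proof.
move=> mX mY XY; rewrite /mass -fineD; [|exact: emass_fin|exact: emass_fin].
by rewrite emass_or.
Qed.

Lemma mass_pred0 X : (forall t w, ~ X t w) -> mass X = 0.
Proof.
move=> X0; rewrite /mass /emass (eq_integral (fun=> 0%E)) ?integral0 //.
move=> t _; rewrite (eq_integral (fun=> 0%E)) ?integral0 // => w _.
by rewrite indicE memNset ?mul0r //; exact: X0.
Qed.

Lemma mass_exists_le_sum (I : finType) (G : I -> Theta -> R -> Prop) :
  (forall k, event (G k)) -> mass (fun t w => exists k, G k t w) <= \sum_k mass (G k).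
Proof.
move=> mG; rewrite -big_enum.
have mGs s : event (fun t w => exists k, k \in s /\ G k t w).
  apply: (measurable_finexists (P := fun k z => k \in s /\ G k z.1 z.2)) => k.
  by apply: measurable_conj; [exact: measurable_cst_prop|exact: mG].
have union_bound s :
    mass (fun t w => exists k, k \in s /\ G k t w) <= \sum_(k <- s) mass (G k).
  elim: s => [|k s IH]; first by rewrite big_nil mass_pred0 // => t w [k []].
  have step : mass (fun t w => exists k', k' \in k :: s /\ G k' t w) <=
      mass (fun t w => G k t w \/ exists k', k' \in s /\ G k' t w).
    apply: mass_le => //; first exact: measurable_disj.
    by move=> t w [k' []]; rewrite in_cons => /orP[/eqP->|]; [left|right; exists k'].
  by rewrite big_cons; apply: le_trans step (le_trans (mass_or_le _ _) (lerD (lexx _) IH)).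
apply: le_trans (union_bound _); apply: mass_le => //.
  exact: (measurable_finexists (P := fun k z => G k z.1 z.2)).
by move=> t w [k]; exists k; rewrite mem_enum.
Qed.
End ConditionalMass.

Lemma le0_forall_small (R : realFieldType) (x b : R) : 0 < b ->
  (forall e, 0 < e < b -> x <= e) -> x <= 0.
Proof.
move=> b0 hx; apply/ler_addgt0Pr => z z0; rewrite add0r.
set m := Num.min z b.
have m0 : 0 < m by rewrite lt_min z0 b0.
have mz : m <= z by rewrite ge_min lexx.
have mb : m <= b by rewrite ge_min lexx orbT.
by apply: le_trans (hx (m / 2) _) _; lra.
Qed.

Lemma ler_wpM2l_ifpos (R : numDomainType) (x a b : R) :
  0 <= x -> (0 < x -> a <= b) -> x * a <= x * b.
Proof.
rewrite le_eqVlt => /orP[/eqP<- _|x0 ab]; first by rewrite !mul0r.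
by apply: ler_wpM2l; [exact: ltW|exact: ab].
Qed.

Lemma pmin_ge (R : realType) N (vbar x : R) (p : 'I_N -> R) (S : {set 'I_N}) :
  x <= vbar -> (forall j, j \in S -> x <= p j) -> x <= pmin vbar p S.
Proof.
move=> xv hS; rewrite /pmin; case: pickP => [j0 j0S|_] //.
apply: (big_ind (fun y => x <= y)); [exact: hS|move=> y z hy hz|exact: hS].
by rewrite le_min hy hz.
Qed.

Lemma exists_perm_nonincreasing (disp : Order.disp_t) (T : orderType disp) N
    (p : 'I_N -> T) :
  exists pi : {perm 'I_N}, forall l l' : 'I_N, (l <= l')%N -> (p (pi l') <= p (pi l))%O.
Proof.
case: N p => [|n] p; first by exists 1%g => -[].
pose ge_p a b := (p b <= p a)%O.
pose s := sort ge_p (enum 'I_n.+1).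
have size_s : size s = n.+1 by rewrite size_sort size_enum_ord.
have uniq_s : uniq s by rewrite sort_uniq enum_uniq.
have sorted_s : sorted ge_p s by apply: sort_sorted => a b; exact: le_total.
have inj : injective (fun l : 'I_n.+1 => nth ord0 s l).
  by move=> a b /eqP; rewrite nth_uniq ?size_s // => /eqP; exact: val_inj.
exists (perm inj) => l l' ll'; rewrite !permE.
apply: (sorted_leq_nth (leT := ge_p)) => //; rewrite ?inE ?size_s //.
- by move=> y x z h1 h2; exact: le_trans h2 h1.
- by move=> x; exact: lexx.
Qed.

Section Equilibrium.
Context (R : realType) (N K : nat) (V : 'I_K -> Type)
        (vals : 'I_N -> forall k : 'I_K, V k) (vbar : R)
        (d : measure_display) (Theta : measurableType d)
        (mu : probability Theta R) (other : Theta -> CLCprims N V)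
        (f : Theta -> R -> R).
Hypotheses (hvalid : forall t, valid_prims (other t))
           (hmeas : prims_measurable vals other)
           (hdens : lipschitz_cond_density vbar f).

Implicit Types (p : 'I_N -> R) (i j k : 'I_N).

Local Notation event X := (measurable [set z : Theta * R | X z.1 z.2]).
Local Notation Rev := (revenue vals vbar mu other f).
Local Notation mass := (mass vbar mu f).

Definition buyers (p : 'I_N -> R) i : Theta -> R -> Prop :=
  fun t w => buys vals (other t) w p i.

Lemma revenueE i p : Rev i p = p i * mass (buyers p i).
Proof. by []. Qed.

Lemma measurable_lexpref p i j : measurable [set t | lexpref vals (other t) p i j].
Proof.
case: hmeas => mimp mpref _ _.
apply: measurable_finexists => a; apply: measurable_conj.
  apply: measurable_finforall => a'; apply: measurable_impl; first exact: mimp.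
  by case: a' => [k|] /=; [apply: measurable_conj|exact: measurable_cst_prop].
case: a => [k|] /=; last exact: measurable_cst_prop.
by apply: measurable_conj; [exact: mpref|apply: measurable_not; exact: mpref].
Qed.

Lemma measurable_ranks_above p i j :
  measurable [set t | ranks_above vals (other t) p i j].
Proof.
case: hmeas => _ _ _ mtb.
apply: measurable_disj; first exact: measurable_lexpref.
by do 2![apply: measurable_conj; first by apply: measurable_not; exact: measurable_lexpref].
Qed.

Lemma measurable_considers p i : event (fun t w => considers vals (other t) w p i).
Proof.
case: hmeas => _ _ madm _.
apply: measurable_conj; first exact: measurable_snd_ge.
exact: (measurable_fst_pred (E := fun t => adm (other t) (vals i))).
Qed.

Lemma measurable_buyers p i : event (buyers p i).
Proof.
apply: measurable_conj; first exact: measurable_considers.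
apply: measurable_finforall => j; apply: measurable_impl.
  exact: measurable_considers.
apply: measurable_impl; first exact: measurable_cst_prop.
exact: (measurable_fst_pred (E := fun t => ranks_above vals (other t) p i j)
          (measurable_ranks_above p i j)).
Qed.

Variable p : 'I_N -> R.
Hypothesis hL : local_nash vbar Rev p.

Lemma local_nash_ball k : exists2 e : R, 0 < e &
  forall q, `|p k - q| < e -> Rev k (upd p k q) <= Rev k p.
Proof.
case: hL => _ /(_ k) [U [oU Uk HU]].
have /nbhs_ballP [e e0 he] : nbhs (p k) U by apply: open_nbhs_nbhs.
exists e => [//|q hq]; apply: HU; apply: subset_closure; exact: he.
Qed.

Definition switchers i k : Theta -> R -> Prop :=
  fun t w => switches_on_undercut vals (other t) w p i k.

Lemma measurable_switchers i k : event (switchers i k).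
Proof.
apply: measurable_conj; first exact: measurable_buyers.
apply: measurable_conj; first exact: measurable_considers.
apply: measurable_conj.
  exact: (measurable_fst_pred
           (E := fun t => ranks_above vals (other t) (upd p k 0) k i)
           (measurable_ranks_above _ _ _)).
by apply: measurable_conj; exact: measurable_cst_prop.
Qed.

(* Undercutting i by eps, seller k keeps its own customers and gains all the
   switchers; since this does not pay, the switchers carry revenue <= eps. *)
Lemma undercut_revenue_bound i k eps : k <> i -> p k = p i -> 0 < eps < p i ->
  Rev k (upd p k (p i - eps)) <= Rev k p -> p i * mass (switchers i k) <= eps.
Proof.
move=> nki eki /andP[eps0 epsi]; rewrite !revenueE upd_same eki => hR.
have mBS : event (fun t w => buyers p k t w \/ switchers i k t w).
  by apply: measurable_disj; [exact: measurable_buyers|exact: measurable_switchers].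
have disjoint t w : buyers p k t w -> ~ switchers i k t w.
  by move=> hk [hi _]; exact: nki (buys_unique (hvalid t) hk hi).
have gain : mass (buyers p k) + mass (switchers i k) <=
            mass (buyers (upd p k (p i - eps)) k).
  rewrite -(mass_or mu hdens (measurable_buyers p k) (measurable_switchers i k) disjoint).
  apply: (mass_le mu hdens mBS (measurable_buyers _ k)).
  move=> t w [hk|hs]; first by apply: buys_lower_own; rewrite ?eki ?gerBl ?ltW.
  apply: (switches_on_undercut_buys (hvalid t)) hs.
  by rewrite subr_ge0 ltW //= ltrBlDr ltrDl.
have le1 : mass (buyers p k) + mass (switchers i k) <= 1.
  rewrite -(mass_or mu hdens (measurable_buyers p k) (measurable_switchers i k) disjoint).
  exact: mass_le1.
set b := mass (buyers p k); set s := mass (switchers i k).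
have q0 : 0 <= p i - eps by rewrite subr_ge0 ltW.
have hgain := ler_wpM2l q0 gain.
have hs : p i * s <= eps * (b + s).
  have e : eps * (b + s) - p i * s = p i * b - (p i - eps) * (b + s) by ring.
  by rewrite -subr_ge0 e subr_ge0 (le_trans hgain hR).
by rewrite (le_trans hs) // -[leRHS]mulr1 ler_wpM2l // ltW.
Qed.

Lemma switchers_null i k : 0 < p i -> mass (switchers i k) = 0.
Proof.
move=> pi0; have [[nki eki]|tie] := pselect (k <> i /\ p k = p i); last first.
  by apply: mass_pred0 => t w [_ [_ [_ hki]]]; apply: tie.
apply/eqP; rewrite eq_le (mass_ge0 mu hdens) andbT -(pmulr_rle0 _ pi0).
have [e e0 he] := local_nash_ball k.
apply: (le0_forall_small (b := Num.min e (p i))); first by rewrite lt_min e0 pi0.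
move=> eps /andP[eps0]; rewrite lt_min => /andP[epse epsi].
have hR : Rev k (upd p k (p i - eps)) <= Rev k p.
  by apply: he; rewrite eki opprB addrC subrK gtr0_norm.
by apply: (undercut_revenue_bound nki eki _ hR); rewrite eps0 epsi.
Qed.

Lemma demand_zeroing_ge i p'' : 0 < p i -> p'' i = p i ->
  (forall j, j <> i -> p'' j = p j \/ (p'' j = 0 /\ p j <= p i)) ->
  mass (buyers p i) <= mass (buyers p'' i).
Proof.
move=> pi0 hi hj.
have mS : event (fun t w => exists k, switchers i k t w).
  exact: (measurable_finexists (P := fun k z => switchers i k z.1 z.2))
           (fun k => measurable_switchers i k).
have null : mass (fun t w => exists k, switchers i k t w) = 0.
  apply/eqP; rewrite eq_le (mass_ge0 mu hdens) andbT.
  rewrite (le_trans (mass_exists_le_sum mu hdens (fun k => measurable_switchers i k))) //.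
  by rewrite big1 // => k _; exact: switchers_null.
have lost : mass (buyers p i) <=
            mass (fun t w => buyers p'' i t w \/ exists k, switchers i k t w).
  apply: mass_le => //; first exact: measurable_buyers.
    exact: measurable_disj (measurable_buyers _ _) mS.
  by move=> t w; apply: (buys_after_zeroing (hvalid t)).
have := mass_or_le mu hdens (Y := fun t w => exists k, switchers i k t w)
  (measurable_buyers p'' i) mS.
by rewrite null addr0; exact: le_trans lost.
Qed.

Lemma local_max_restricted i (S : {set 'I_N}) :
  (forall j, j \in S -> p i <= p j) -> (forall j, j \notin S -> p j <= p i) ->
  local_max_on (fun q => Rev i (upd (Defs.restrict p S) i q)) 0 (pmin vbar p S) (p i).
Proof.
move=> hS hnS; have [hbound _] := hL.
have p0 j : 0 <= p j by case/andP: (hbound j).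
split; first by rewrite p0 /=; apply: pmin_ge => //; case/andP: (hbound i).
have [e e0 he] := local_nash_ball i.
exists e; split; first exact: e0.
move=> q /andP[q0 _] hq.
set p' := Defs.restrict p S.
have rivals_cheaper : Rev i (upd p' i q) <= Rev i (upd p i q).
  rewrite !revenueE !upd_same.
  apply: ler_wpM2l; first exact: q0.
  apply: mass_le => //; [exact: measurable_buyers|exact: measurable_buyers|].
  move=> t w; apply: (buys_raise_rivals (hvalid t)); last by rewrite !upd_same.
  by move=> j ji; rewrite !upd_other // /p' /Defs.restrict; case: ifP.
have deviation : Rev i (upd p i q) <= Rev i p by apply: he; rewrite distrC.
have zeroing : Rev i p <= Rev i (upd p' i (p i)).
  rewrite !revenueE upd_same.
  apply: ler_wpM2l_ifpos (p0 i) _ => pi0.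
  apply: demand_zeroing_ge => //; first exact: upd_same.
  move=> j ji; rewrite upd_other // /p' /Defs.restrict; case: ifP => jS; first by left.
  by right; split => //; apply: hnS; rewrite jS.
exact: le_trans rivals_cheaper (le_trans deviation zeroing).
Qed.
End Equilibrium.

Unset Implicit Arguments. Set Strict Implicit.
Theorem theorem4p2 (R : realType) (N K : nat) (V : 'I_K -> Type)
    (vals : 'I_N -> forall k : 'I_K, V k) (vbar : R) (hvbar : 0 < vbar)
    (d : measure_display) (Theta : measurableType d)
    (mu : probability Theta R) (other : Theta -> CLCprims N V)
    (f : Theta -> R -> R)
    (hvalid : forall t, valid_prims (other t))
    (hmeas : prims_measurable vals other)
    (hdens : lipschitz_cond_density vbar f)
    (p : 'I_N -> R) :
  local_nash vbar (revenue vals vbar mu other f) p ->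
  exists pi : {perm 'I_N},
    valid_order_price vbar (revenue vals vbar mu other f) pi p.
Proof.
move=> hL; have [pi hpi] := exists_perm_nonincreasing p.
exists pi; split => [|//|l S]; first by case: hL.
apply: (local_max_restricted hvalid hmeas hdens hL) => j.
  by case/imsetP => j' /[!inE] j'l ->; apply/hpi/ltnW.
move=> jS; rewrite -(permKV pi j); apply: hpi; rewrite leqNgt.
by apply: contra jS => jl; apply/imsetP; exists (pi^-1 j)%g; rewrite ?inE ?permKV.
Qed.
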